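(* Let $\mathcal{V}$ be a real vector space of dimension $d$, let $\tau\in\vee^2\mathcal{V}^*$ have rank $p+1$ and Lorentzian signature, and let $\gamma$ be a positive-definite metric on $\mathrm{Ker}(\tau)=\{v\in\mathcal{V}:\tau(v,\cdot)=0\}$. Let $f_p(\mathcal{V},\tau,\gamma)$ be the set of frames $(\tau_A,e_i)$ of $\mathcal{V}$ ($A=0,\dots,p$, $i=1,\dots,d-p-1$) with $e_i\in\mathrm{Ker}(\tau)$, $\tau(\tau_A,\tau_B)=\eta_{AB}$ and $\gamma(e_i,e_j)=\delta_{ij}$. Then the formula $$(\tau_A,e_i)\cdot g=\big({\Lambda^A}_B\tau_A+{v^i}_Be_i,\ {R^i}_je_i\big),\qquad g=\begin{pmatrix}{\Lambda^A}_B&0\\ {v^i}_B&{R^i}_j\end{pmatrix}\in G_p,$$ defines a right action of $G_p$ on $f_p(\mathcal{V},\tau,\gamma)$ which is free and transitive, i.e.\ $f_p(\mathcal{V},\tau,\gamma)$ is a $G_p$-torsor.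
   Context: $\eta_{AB}=\mathrm{diag}(-1,1,\dots,1)$ is the Lorentz metric in $p+1$ dimensions. $G_p$ is the group of $d\times d$ real block matrices $\begin{pmatrix}\Lambda&0\\ v&R\end{pmatrix}$ with $\Lambda\in O(1,p)$, $R\in O(d-p-1)$ and $v$ an arbitrary real $(d-p-1)\times(p+1)$ matrix. *)

(* V = 'rV[R]_d with d = p.+1 + n, R : realType. *)
From HB Require Import structures.
From mathcomp Require Import all_boot all_order all_algebra.
From mathcomp Require Import reals.
Set Implicit Arguments. Unset Strict Implicit. Unset Printing Implicit Defensive.
Import Order.TTheory GRing.Theory Num.Theory.
Local Open Scope ring_scope.

Section Defs.
Variable R : realType.

Definition eta (p : nat) : 'M[R]_(p.+1) :=
  \matrix_(A, B) (if A == B then (if A == ord0 then -1 else 1) else 0).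

Variables (p n : nat).
Local Notation d := (p.+1 + n)%N.

Definition form (T : 'M[R]_d) (u v : 'rV[R]_d) : R := (u *m T *m v^T) 0 0.

(* tau has rank p+1 and Lorentzian signature: in some basis it is
   diag(-1,1,..,1,0,..,0) with p+1 nonzero entries (Sylvester normal form) *)
Definition lorentzian_rank (T : 'M[R]_d) : Prop :=
  exists P : 'M[R]_d, P \in unitmx /\
    P *m T *m P^T = block_mx (eta p) 0 0 (0 : 'M[R]_n).

Definition inKer (T : 'M[R]_d) (v : 'rV[R]_d) : Prop := v *m T = 0.

(* gamma : a positive-definite (symmetric bilinear) metric on Ker(tau);
   represented by a matrix Gm, only its values on Ker(tau) matter *)
Definition pos_metric_on_ker (T Gm : 'M[R]_d) : Prop :=
  (forall u v, inKer T u -> inKer T v -> form Gm u v = form Gm v u) /\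
  (forall v, inKer T v -> v != 0 -> 0 < form Gm v v).

(* A frame (tau_A, e_i) is a basis of V, stored as the rows of a d x d matrix:
   row (lshift n A) F = tau_A, row (rshift p.+1 i) F = e_i. *)
Definition frame_tau (F : 'M[R]_d) : 'M[R]_(p.+1, d) := usubmx F.
Definition frame_e (F : 'M[R]_d) : 'M[R]_(n, d) := dsubmx F.

Definition in_fp (T Gm F : 'M[R]_d) : Prop :=
  F \in unitmx /\
  (forall i, inKer T (row i (frame_e F))) /\
  frame_tau F *m T *m (frame_tau F)^T = eta p /\
  frame_e F *m Gm *m (frame_e F)^T = 1%:M.

Definition inLorentz (L : 'M[R]_(p.+1)) : Prop := L^T *m eta p *m L = eta p.
Definition inOrth (Q : 'M[R]_n) : Prop := Q^T *m Q = 1%:M.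
Definition inGp (g : 'M[R]_d) : Prop :=
  exists (L : 'M[R]_(p.+1)) (v : 'M[R]_(n, p.+1)) (Q : 'M[R]_n),
    inLorentz L /\ inOrth Q /\ g = block_mx L 0 v Q.

(* (tau_A, e_i) . g = (Lambda^A_B tau_A + v^i_B e_i, R^i_j e_i):
   new B-th row = sum_A g_{AB} (old A-th row) etc., i.e. F . g = g^T *m F *)
End Defs.

Definition frame_act (R : realType) (m : nat) (F g : 'M[R]_m) : 'M[R]_m := g^T *m F.

(* Rows in Ker tau are invisible to tau, so the new tau-rows L^T tau + v^T e have
   tau-Gram matrix L^T eta L = eta, while the e-rows Q^T e stay gamma-orthonormal.
   Conversely, for two frames the transition matrix X = F2 F1^-1 gives new e-rows
   without tau-component, because e2 T tau1^T = 0 while tau1 T tau1^T = eta is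
   invertible; its diagonal blocks then preserve eta and the identity, so X^T is
   in G_p, and it is unique since F1 is invertible.  A frame exists: a Sylvester
   basis of tau supplies the tau-rows and a basis B of Ker tau, and reducing the
   positive definite Gram matrix B Gm B^T to the identity by congruence
   (symmetric elimination of one pivot at a time) makes B gamma-orthonormal. *)

From Pilot Require Import Defs.
From mathcomp Require Import all_boot all_order all_algebra.
From mathcomp Require Import reals.

Import Order.TTheory GRing.Theory Num.Theory.
Local Open Scope ring_scope.

Section QuadraticForms.
Context {R : comPzRingType}.

Lemma quad_mulmx {k m l} (X : 'M[R]_(k, m)) (Y : 'M_(m, l)) (G : 'M_l) :
  (X *m Y) *m G *m (X *m Y)^T = X *m (Y *m G *m Y^T) *m X^T.
Proof. by rewrite trmx_mul !mulmxA. Qed.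

Lemma quad_add_ker {k m1 m2 l} (a : 'M[R]_(k, m1)) (b : 'M_(k, m2))
    (t : 'M_(m1, l)) (e : 'M_(m2, l)) (T : 'M_l) :
  T^T = T -> e *m T = 0 ->
  (a *m t + b *m e) *m T *m (a *m t + b *m e)^T = a *m (t *m T *m t^T) *m a^T.
Proof.
move=> sT eT; have Te : T *m e^T = 0 by rewrite -sT -trmx_mul eT trmx0.
rewrite mulmxDl -(mulmxA b) eT mulmx0 addr0 raddfD /= mulmxDr.
rewrite [X in _ + X](_ : _ = 0) ?addr0 ?quad_mulmx //.
by rewrite trmx_mul !mulmxA -(mulmxA _ T) Te mulmx0 mul0mx.
Qed.

Lemma trmx_sym_form {k} (M : 'M[R]_k) :
  (forall x y : 'rV_k, (x *m M *m y^T) 0 0 = (y *m M *m x^T) 0 0) -> M^T = M.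
Proof.
move=> symM; apply/matrixP => i j.
by have := symM (delta_mx 0 j) (delta_mx 0 i); rewrite !trmx_delta -!rowE -!colE !mxE.
Qed.

End QuadraticForms.

Section PositiveDefinite.
Context {R : rcfType}.

Definition posdefmx {n} (M : 'M[R]_n) : Prop :=
  forall x : 'rV_n, x != 0 -> 0 < (x *m M *m x^T) 0 0.

Lemma posdefmx_congr {n} {E M : 'M[R]_n} :
  E \in unitmx -> posdefmx M -> posdefmx (E *m M *m E^T).
Proof.
move=> uE pM x xN0; rewrite -quad_mulmx; apply: pM.
by rewrite mulmx_free_eq0 ?row_free_unit.
Qed.

Lemma posdefmx_ulsubmx {m n} {M : 'M[R]_(m + n)} : posdefmx M -> posdefmx (ulsubmx M).
Proof.
move=> pM x xN0; have := pM (row_mx x 0).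
rewrite -{1}[M]submxK mul_row_block tr_row_mx mul_row_col !mul0mx !addr0 trmx0 mulmx0 addr0.
by apply; rewrite -row_mx0; apply: contra xN0 => /eqP/eq_row_mx[-> _].
Qed.

Lemma posdefmx_drsubmx {m n} {M : 'M[R]_(m + n)} : posdefmx M -> posdefmx (drsubmx M).
Proof.
move=> pM x xN0; have := pM (row_mx 0 x).
rewrite -{1}[M]submxK mul_row_block tr_row_mx mul_row_col !mul0mx !add0r trmx0 mulmx0 add0r.
by apply; rewrite -row_mx0; apply: contra xN0 => /eqP/eq_row_mx[_ ->].
Qed.

Lemma sym_posdefmx_pivot {n} {M : 'M[R]_(1 + n)} : M^T = M -> posdefmx M ->
  exists (E : 'M_(1 + n)) (D : 'M_n), E \in unitmx /\ E *m M *m E^T = block_mx 1%:M 0 0 D.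
Proof.
move=> sM pM; have al_gt0 : 0 < ulsubmx M 0 0.
  by have := posdefmx_ulsubmx pM 1; rewrite trmx1 mulmx1 mul1mx; apply; rewrite oner_eq0.
rewrite -[M]submxK in sM *; set a := ulsubmx M in al_gt0 *.
set b := ursubmx M; set c := dlsubmx M; set D := drsubmx M.
rewrite tr_block_mx in sM; case/eq_block_mx: sM => _ tr_c _ _.
set al := a 0 0 in al_gt0; have -> : a = al%:M by apply: mx11_scalar.
set s := Num.sqrt al; have s_gt0 : 0 < s by rewrite sqrtr_gt0.
have ss : s * s = al by rewrite -expr2 sqr_sqrtr // ltW.
exists (block_mx (s^-1)%:M 0 (- al^-1 *: c) 1%:M), (D - al^-1 *: (c *m b)); split.
  by rewrite unitmxE det_lblock det1 mulr1 det_scalar expr1 unitfE invr_eq0 gt_eqF.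
have al_N0 : al != 0 by rewrite gt_eqF.
have elim_c : - al^-1 *: c *m al%:M + c = 0.
  by rewrite mul_mx_scalar scalerA mulrN mulfV // scaleN1r addNr.
rewrite tr_block_mx !mulmx_block ?trmx0 ?trmx1 ?mulmx0 ?mul0mx ?mulmx1 ?mul1mx ?addr0 ?add0r.
rewrite elim_c !mul0mx add0r; congr block_mx.
- rewrite tr_scalar_mx -!scalar_mxM -ss; congr _%:M.
  by rewrite mulKf ?divff // gt_eqF.
- rewrite linearZ /= tr_c -/b -mulmxA (mul_scalar_mx al) scalerA mulrN mulfV //.
  by rewrite scaleN1r -mulmxDr addNr mulmx0.
- by rewrite -scalemxAl scaleNr addrC.
Qed.

Lemma sym_posdefmx_congr1 {n} {M : 'M[R]_n} :
  M^T = M -> posdefmx M -> exists Q : 'M_n, Q *m M *m Q^T = 1%:M.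
Proof.
elim: n M => [|n IH] M sM pM; first by exists 0; apply/matrixP => -[].
move: M sM pM; change n.+1 with (1 + n)%N => M sM pM.
have [E [D [uE hE]]] := sym_posdefmx_pivot sM pM.
have sD : D^T = D.
  have : (E *m M *m E^T)^T = E *m M *m E^T by rewrite !trmx_mul trmxK sM mulmxA.
  by rewrite hE tr_block_mx => /eq_block_mx[_ _ _ ->].
have pD : posdefmx D.
  by have := posdefmx_drsubmx (posdefmx_congr uE pM); rewrite hE block_mxKdr.
have [Q hQ] := IH D sD pD.
exists (block_mx 1%:M 0 0 Q *m E); rewrite quad_mulmx hE tr_block_mx !mulmx_block.
by rewrite !(mul0mx, mulmx0, add0r, addr0, trmx0, trmx1, mul1mx, mulmx1) hQ scalar_mx_block.
Qed.

End PositiveDefinite.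

Lemma eta_mulmx_eta (R : realType) (p : nat) : Defs.eta R p *m Defs.eta R p = 1%:M.
Proof.
apply/matrixP => i j; rewrite !mxE (bigD1 i) //= big1 ?addr0 => [|k ki]; last first.
  by rewrite !mxE eq_sym (negbTE ki) mul0r.
rewrite !mxE eqxx eq_sym; case: (i == j); last by rewrite mulr0.
by case: (ord0 == i); rewrite ?mulrNN mulr1.
Qed.

Lemma lorentz_unitmx {R : realType} {p} {L : 'M[R]_p.+1} : inLorentz L -> L \in unitmx.
Proof.
move=> hL; suff /mulmx1_unit[] : Defs.eta R p *m L^T *m Defs.eta R p *m L = 1%:M by [].
by rewrite -!mulmxA (mulmxA L^T) hL eta_mulmx_eta.
Qed.

Lemma frame_act1 {R : realType} {m} (F : 'M[R]_m) : frame_act F 1%:M = F.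
Proof. by rewrite /frame_act trmx1 mul1mx. Qed.

Lemma frame_actM {R : realType} {m} (F g h : 'M[R]_m) :
  frame_act F (g *m h) = frame_act (frame_act F g) h.
Proof. by rewrite /frame_act trmx_mul mulmxA. Qed.

Section Frames.
Context {R : realType} {p n : nat}.
Local Notation d := (p.+1 + n)%N.
Variables T Gm : 'M[R]_d.
Hypothesis sym_T : T^T = T.

Lemma in_fpP (F : 'M[R]_d) :
  in_fp T Gm F <->
  [/\ F \in unitmx, frame_e F *m T = 0,
      frame_tau F *m T *m (frame_tau F)^T = Defs.eta R p
    & frame_e F *m Gm *m (frame_e F)^T = 1%:M].
Proof.
split=> [[uF [kerF [tauF eF]]]|[uF eT tauF eF]].
  by split=> //; apply/row_matrixP => i; rewrite row_mul kerF row0.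
by split=> //; split=> // i; rewrite /inKer -row_mul eT row0.
Qed.

Lemma frame_tau_col (t : 'M[R]_(p.+1, d)) (e : 'M_(n, d)) : frame_tau (col_mx t e) = t.
Proof. exact: col_mxKu. Qed.

Lemma frame_e_col (t : 'M[R]_(p.+1, d)) (e : 'M_(n, d)) : frame_e (col_mx t e) = e.
Proof. exact: col_mxKd. Qed.

Lemma frame_act_block (F : 'M[R]_d) L (v : 'M_(n, p.+1)) Q :
  frame_act F (block_mx L 0 v Q) =
  col_mx (L^T *m frame_tau F + v^T *m frame_e F) (Q^T *m frame_e F).
Proof. by rewrite /frame_act tr_block_mx trmx0 -{1}[F]vsubmxK mul_block_col mul0mx add0r. Qed.

Lemma frame_act_in_fp (F g : 'M[R]_d) : in_fp T Gm F -> inGp g -> in_fp T Gm (frame_act F g).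
Proof.
move=> /in_fpP[uF eT tauF eF] [L [v [Q [hL [hQ ->]]]]]; apply/in_fpP; split.
- rewrite unitmx_mul unitmx_tr uF andbT unitmxE det_lblock unitrM -!unitmxE.
  by rewrite lorentz_unitmx //; case: (mulmx1_unit hQ).
all: rewrite frame_act_block ?frame_tau_col ?frame_e_col.
- by rewrite -mulmxA eT mulmx0.
- by rewrite quad_add_ker // tauF trmxK hL.
- by rewrite quad_mulmx eF mulmx1 trmxK hQ.
Qed.

Lemma transition_inGp (F1 F2 : 'M[R]_d) :
  in_fp T Gm F1 -> in_fp T Gm F2 -> inGp (F2 *m invmx F1)^T.
Proof.
move=> /in_fpP[uF1 e1T tau1 eF1] /in_fpP[_ e2T tau2 eF2].
set X := F2 *m invmx F1.
have : block_mx (ulsubmx X) (ursubmx X) (dlsubmx X) (drsubmx X) *m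
    col_mx (frame_tau F1) (frame_e F1) = col_mx (frame_tau F2) (frame_e F2).
  by rewrite submxK !vsubmxK mulmxKV.
rewrite mul_block_col => /eq_col_mx[htau he].
have c0 : dlsubmx X = 0.
  have : frame_e F2 *m T *m (frame_tau F1)^T = 0 by rewrite e2T mul0mx.
  rewrite -he mulmxDl mulmxDl -(mulmxA (drsubmx X)) e1T mulmx0 mul0mx addr0.
  rewrite -!mulmxA (mulmxA (frame_tau F1)) tau1 => c_eta0.
  by rewrite -[dlsubmx X]mulmx1 -eta_mulmx_eta mulmxA c_eta0 mul0mx.
exists (ulsubmx X)^T, (ursubmx X)^T, (drsubmx X)^T; split; [|split].
- rewrite /inLorentz trmxK -{1}tau1.
  by rewrite -(quad_add_ker _ (ursubmx X) _ _ _ sym_T e1T) htau tau2.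
- by rewrite c0 mul0mx add0r in he; rewrite /inOrth trmxK -eF2 -he quad_mulmx eF1 mulmx1.
- by rewrite -{1}[X]submxK c0 tr_block_mx trmx0.
Qed.

Lemma frame_act_regular (F1 F2 : 'M[R]_d) :
  in_fp T Gm F1 -> in_fp T Gm F2 -> exists! g : 'M[R]_d, inGp g /\ frame_act F1 g = F2.
Proof.
move=> hF1 hF2; have [uF1 _ _ _] := (in_fpP F1).1 hF1.
exists (F2 *m invmx F1)^T; split.
  by split; [exact: transition_inGp | rewrite /frame_act trmxK mulmxKV].
by move=> g [_ <-]; rewrite /frame_act mulmxK // trmxK.
Qed.

Lemma exists_in_fp :
  lorentzian_rank T -> pos_metric_on_ker T Gm -> exists F : 'M[R]_d, in_fp T Gm F.
Proof.
move=> [P [uP hP]] [symG posG]; rewrite -[P]vsubmxK in uP hP.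
set t := usubmx P in uP hP; set B := dsubmx P in uP hP.
rewrite tr_col_mx mul_col_mx mul_col_row in hP.
case/eq_block_mx: hP => tau_t _ BTt BTB.
have BT0 : B *m T = 0.
  have uPT : (col_mx t B)^T \in unitmx by rewrite unitmx_tr.
  have : (B *m T) *m (col_mx t B)^T = 0 by rewrite tr_col_mx mul_mx_row BTt BTB row_mx0.
  by move/(canRL (mulmxK uPT)); rewrite mul0mx.
have B_inj (x : 'rV_n) : x != 0 -> x *m B != 0.
  apply: contra => /eqP xB0.
  have : row_mx (0 : 'rV_p.+1) x *m col_mx t B == 0 by rewrite mul_row_col mul0mx add0r xB0.
  by rewrite mulmx_free_eq0 ?row_free_unit // -row_mx0 => /eqP/eq_row_mx[_ ->].
have kerB (x : 'rV_n) : inKer T (x *m B) by rewrite /inKer -mulmxA BT0 mulmx0.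
set M := B *m Gm *m B^T.
have formM (x y : 'rV_n) : x *m M *m y^T = (x *m B) *m Gm *m (y *m B)^T.
  by rewrite trmx_mul !mulmxA.
have sym_M : M^T = M.
  by apply: trmx_sym_form => x y; rewrite !formM; apply: symG; apply: kerB.
have pos_M : posdefmx M by move=> x /B_inj xB; rewrite formM; apply: posG (kerB x) xB.
have [Q hQ] := sym_posdefmx_congr1 sym_M pos_M.
have [_ uQ] := mulmx1_unit hQ; rewrite unitmx_tr in uQ.
exists (col_mx t (Q *m B)); apply/in_fpP; rewrite frame_tau_col frame_e_col; split=> //.
- rewrite (_ : col_mx _ _ = block_mx 1%:M 0 0 Q *m col_mx t B); last first.
    by rewrite mul_block_col !mul0mx mul1mx addr0 add0r.
  by rewrite unitmx_mul uP andbT unitmxE det_lblock det1 mul1r -unitmxE.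
- by rewrite -mulmxA BT0 mulmx0.
- by rewrite quad_mulmx hQ.
Qed.

End Frames.

Theorem proposition1 (R : realType) (p n : nat) (T Gm : 'M[R]_(p.+1 + n)) :
  T^T = T ->
  lorentzian_rank T ->
  pos_metric_on_ker T Gm ->
  (* the formula maps f_p into itself for g in G_p *)
  (forall F g : 'M[R]_(p.+1 + n), in_fp T Gm F -> inGp g -> in_fp T Gm (frame_act F g)) /\
  (* it is a right action *)
  (forall F : 'M[R]_(p.+1 + n), frame_act F 1%:M = F) /\
  (forall F g h : 'M[R]_(p.+1 + n), inGp g -> inGp h ->
     frame_act F (g *m h) = frame_act (frame_act F g) h) /\
  (* f_p is nonempty (torsor) *)
  (exists F : 'M[R]_(p.+1 + n), in_fp T Gm F) /\
  (* free and transitive *)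
  (forall F1 F2 : 'M[R]_(p.+1 + n), in_fp T Gm F1 -> in_fp T Gm F2 ->
     exists! g : 'M[R]_(p.+1 + n), inGp g /\ frame_act F1 g = F2).
Proof.
move=> sym_T lorentz_T metric_G.
split; first by move=> F g; exact: frame_act_in_fp.
split; first exact: frame_act1.
split; first by move=> F g h _ _; exact: frame_actM.
split; first exact: exists_in_fp.
by move=> F1 F2; exact: frame_act_regular.
Qed.
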